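(* Let $f$ be an entire function on $\mathbb{C}$ which is not identically zero. Then the vector-valued holomorphic functions $\Phi_f$ and $\Psi_f$ on $\mathbb{C}^k$ are not identically zero.
   Context: Fix an integer $k\ge 2$. Use coordinates $s=(s_1,\dots,s_k)$ on $\mathbb{C}^k$, set $s_0:=1$, $P_s(z):=\sum_{h=0}^k(-1)^hs_hz^{k-h}$ and $P_s'(z):=\partial_zP_s(z)$. Let $E(z):=(1,z,\dots,z^{k-1})^T$. For an entire function $f$, define the $\mathbb{C}^k$-valued holomorphic functions $$\Phi_f(s):=\frac{1}{2i\pi}\int_{|\zeta|=R}\frac{f(\zeta)E(\zeta)\,d\zeta}{P_s(\zeta)},\qquad \Psi_f(s):=\frac{1}{2i\pi}\int_{|\zeta|=R}\frac{f(\zeta)E(\zeta)P'_s(\zeta)\,d\zeta}{P_s(\zeta)},$$ where $R$ is large enough that all roots of $P_s$ lie in $\{|\zeta|<R\}$ (the integrals do not depend on such $R$). *)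

From Stdlib Require Import Reals.
From Coquelicot Require Import Coquelicot.
Open Scope C_scope.

Fixpoint Csum (n : nat) (g : nat -> C) : C :=
  match n with
  | O => 0
  | S m => Csum m g + g m
  end.

Definition entire (f : C -> C) : Prop := forall z : C, ex_derive f z.

(* coordinates s = (s_1,...,s_k) given as s : nat -> C (only s 1..s k used);
   s_0 := 1 *)
Definition sext (s : nat -> C) (h : nat) : C :=
  match h with O => 1 | _ => s h end.

Definition Ps (k : nat) (s : nat -> C) (z : C) : C :=
  Csum (S k) (fun h => (-1) ^ h * sext s h * z ^ (k - h)).

Definition dPs (k : nat) (s : nat -> C) (z : C) : C :=
  Csum k (fun h => (-1) ^ h * sext s h * RtoC (INR (k - h)) * z ^ (k - h - 1)).

(* (1/(2 i pi)) \int_{|zeta| = R} g(zeta) d zeta, circle positively oriented,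
   parametrized by zeta = R e^{it}, t in [0, 2 pi] *)
Definition circle_integral (Rad : R) (g : C -> C) : C :=
  / ((0, 2 * PI)%R : C) *
  @RInt C_R_CompleteNormedModule
    (fun t : R => g ((Rad * cos t)%R, (Rad * sin t)%R) *
                  ((- (Rad * sin t))%R, (Rad * cos t)%R)) 0 (2 * PI).

(* j-th component (0 <= j < k) of Phi_f(s), E(z) = (1, z, ..., z^(k-1)) *)
Definition Phi (f : C -> C) (k : nat) (s : nat -> C) (Rad : R) (j : nat) : C :=
  circle_integral Rad (fun zeta => f zeta * zeta ^ j / Ps k s zeta).

Definition Psi (f : C -> C) (k : nat) (s : nat -> C) (Rad : R) (j : nat) : C :=
  circle_integral Rad (fun zeta => f zeta * zeta ^ j * dPs k s zeta / Ps k s zeta).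

Definition admissible (k : nat) (s : nat -> C) (Rad : R) : Prop :=
  (0 < Rad)%R /\ forall z : C, Ps k s z = 0 -> (Cmod z < Rad)%R.

(* Take s = (a, 0, ..., 0), so that P_s(z) = z^(k-1) (z - a), where f(a) <> 0 and a = 0
   whenever f(0) <> 0.  The last component of Phi_f(s) is then the circle integral of
   f(z) / (z - a), and since P_s'/P_s = (k-1)/z + 1/(z - a), the first component of Psi_f(s)
   is (k-1) f(0) + f(a); both are nonzero by Cauchy's integral formula.  For an f that is
   only assumed complex differentiable, Cauchy's formula is obtained from Goursat's lemma
   (by bisection) on the straight-line homotopy between the circle |z| = R and a small
   circle around a, whose radius is then sent to 0. *)

From Stdlib Require Import Reals Lra Lia Classical ClassicalEpsilon.
From Coquelicot Require Import Coquelicot.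
Open Scope R_scope.

Lemma nested_intervals (A B : nat -> R) :
  Un_growing A -> Un_decreasing B -> (forall n, A n <= B n) ->
  exists p, forall n, A n <= p <= B n.
Proof.
  intros HA HB HAB.
  assert (Hle : forall n m, A n <= B m).
  { intros n m.
    pose proof (growing_prop A (max n m) n HA (Nat.le_max_l n m)).
    pose proof (decreasing_prop B m (max n m) HB (Nat.le_max_r n m)).
    pose proof (HAB (max n m)). lra. }
  destruct (completeness (fun x => exists n, x = A n)) as [p [Hub Hlub]].
  - exists (B 0%nat). intros x [n ->]. apply Hle.
  - exists (A 0%nat), 0%nat. reflexivity.
  - exists p. intros n. split.
    + apply Hub. now exists n.
    + apply Hlub. intros x [m ->]. apply Hle.
Qed.

Section RectangleBisection.

Variable P : R -> R -> R -> R -> Prop.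
Variables x0 x1 y0 y1 : R.
Hypothesis (Hx : x0 <= x1) (Hy : y0 <= y1).

Hypothesis P_of_quarters : forall a b c d,
  x0 <= a -> a <= b -> b <= x1 -> y0 <= c -> c <= d -> d <= y1 ->
  P a ((a + b) / 2) c ((c + d) / 2) -> P ((a + b) / 2) b c ((c + d) / 2) ->
  P a ((a + b) / 2) ((c + d) / 2) d -> P ((a + b) / 2) b ((c + d) / 2) d ->
  P a b c d.

Hypothesis P_local : forall p q, x0 <= p <= x1 -> y0 <= q <= y1 ->
  exists del, 0 < del /\ forall a b c d,
    x0 <= a <= p -> p <= b <= x1 -> y0 <= c <= q -> q <= d <= y1 ->
    b - a < del -> d - c < del -> P a b c d.

Let wid (n : nat) : R := (x1 - x0) / 2 ^ n.
Let hgt (n : nat) : R := (y1 - y0) / 2 ^ n.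

Let Q (n : nat) (ac : R * R) : Prop :=
  P (fst ac) (fst ac + wid n) (snd ac) (snd ac + hgt n).

Let inside (n : nat) (ac : R * R) : Prop :=
  x0 <= fst ac /\ fst ac + wid n <= x1 /\ y0 <= snd ac /\ snd ac + hgt n <= y1.

Let child (n : nat) (ac ac' : R * R) : Prop :=
  (fst ac' = fst ac \/ fst ac' = fst ac + wid (S n)) /\
  (snd ac' = snd ac \/ snd ac' = snd ac + hgt (S n)).

Let wid_S n : wid (S n) = wid n / 2.
Proof. unfold wid; simpl. field. apply pow_nonzero. lra. Qed.

Let hgt_S n : hgt (S n) = hgt n / 2.
Proof. unfold hgt; simpl. field. apply pow_nonzero. lra. Qed.

Let wid_ge0 n : 0 <= wid n.
Proof. unfold wid. apply Rmult_le_pos; [lra|]. left. apply Rinv_0_lt_compat, pow_lt. lra. Qed.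

Let hgt_ge0 n : 0 <= hgt n.
Proof. unfold hgt. apply Rmult_le_pos; [lra|]. left. apply Rinv_0_lt_compat, pow_lt. lra. Qed.

Let child_bounds n ac ac' : child n ac ac' ->
  fst ac <= fst ac' /\ fst ac' + wid (S n) <= fst ac + wid n /\
  snd ac <= snd ac' /\ snd ac' + hgt (S n) <= snd ac + hgt n.
Proof.
  pose proof (wid_S n). pose proof (hgt_S n). pose proof (wid_ge0 n). pose proof (hgt_ge0 n).
  intros [[E1|E1] [E2|E2]]; rewrite E1, E2; lra.
Qed.

Let failing_child n ac : inside n ac ->
  exists ac', child n ac ac' /\ (~ Q n ac -> ~ Q (S n) ac').
Proof.
  intros Hin. destruct (classic (Q n ac)) as [HQ|HQ].
  { exists ac. split; [unfold child; auto|tauto]. }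
  destruct ac as [a c]. unfold Q in HQ; simpl in HQ. unfold inside in Hin; simpl in Hin.
  pose proof (wid_S n) as Hw. pose proof (hgt_S n) as Hh.
  pose proof (wid_ge0 n). pose proof (hgt_ge0 n).
  assert (Ea : (a + (a + wid n)) / 2 = a + wid (S n)) by lra.
  assert (Ec : (c + (c + hgt n)) / 2 = c + hgt (S n)) by lra.
  assert (Eb : a + wid (S n) + wid (S n) = a + wid n) by lra.
  assert (Ed : c + hgt (S n) + hgt (S n) = c + hgt n) by lra.
  unfold Q, child; simpl.
  destruct (classic (P a (a + wid (S n)) c (c + hgt (S n)))) as [Q1|Q1];
    [|exists (a, c); simpl; tauto].
  destruct (classic (P (a + wid (S n)) (a + wid (S n) + wid (S n)) c (c + hgt (S n))))
    as [Q2|Q2]; [|exists (a + wid (S n), c); simpl; tauto].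
  destruct (classic (P a (a + wid (S n)) (c + hgt (S n)) (c + hgt (S n) + hgt (S n))))
    as [Q3|Q3]; [|exists (a, c + hgt (S n)); simpl; tauto].
  exists (a + wid (S n), c + hgt (S n)); simpl. split; [tauto|]. intros _ Q4.
  apply HQ, P_of_quarters; try lra; rewrite ?Ea, ?Ec; rewrite ?Eb, ?Ed in *; assumption.
Qed.

(* Lower-left corners of nested rectangles: [epsilon] picks a quarter on which P fails
   whenever P fails on the current rectangle. *)
Let corner (n : nat) : R * R :=
  nat_rect (fun _ => (R * R)%type) (x0, y0)
    (fun m ac => epsilon (inhabits (x0, y0))
                   (fun ac' => child m ac ac' /\ (~ Q m ac -> ~ Q (S m) ac'))) n.

Let corner_inside n : inside n (corner n).
Proof.
  induction n as [|n IH].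
  - unfold inside, wid, hgt; simpl. unfold Rdiv. rewrite Rinv_1. lra.
  - destruct (epsilon_spec (inhabits (x0, y0)) _ (failing_child n (corner n) IH))
      as [Hc _].
    apply child_bounds in Hc. unfold inside in *. simpl corner. lra.
Qed.

Let corner_child n :
  child n (corner n) (corner (S n)) /\ (~ Q n (corner n) -> ~ Q (S n) (corner (S n))).
Proof. exact (epsilon_spec _ _ (failing_child n (corner n) (corner_inside n))). Qed.

Lemma rectangle_bisection : P x0 x1 y0 y1.
Proof.
  apply NNPP. intros HnP.
  assert (Hfail : forall n, ~ Q n (corner n)).
  { induction n as [|n IH].
    - unfold Q, wid, hgt; simpl. unfold Rdiv. rewrite Rinv_1, !Rmult_1_r.
      now replace (x0 + (x1 - x0)) with x1 by ring; replace (y0 + (y1 - y0)) with y1 by ring.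
    - exact (proj2 (corner_child n) IH). }
  pose proof (fun n => child_bounds _ _ _ (proj1 (corner_child n))) as Hstep.
  destruct (nested_intervals (fun n => fst (corner n)) (fun n => fst (corner n) + wid n))
    as [p Hp].
  { intros n. apply Hstep. }
  { intros n. apply Hstep. }
  { intros n. pose proof (wid_ge0 n). lra. }
  destruct (nested_intervals (fun n => snd (corner n)) (fun n => snd (corner n) + hgt n))
    as [q Hq].
  { intros n. apply Hstep. }
  { intros n. apply Hstep. }
  { intros n. pose proof (hgt_ge0 n). lra. }
  pose proof (corner_inside 0) as H0. unfold inside in H0.
  destruct (P_local p q) as [del [Hdel Hsmall]];
    [specialize (Hp 0%nat); simpl in *; lra|specialize (Hq 0%nat); simpl in *; lra|].
  destruct (cv_pow_half (x1 - x0) del Hdel) as [N1 HN1].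
  destruct (cv_pow_half (y1 - y0) del Hdel) as [N2 HN2].
  set (n := max N1 N2).
  specialize (HN1 n (Nat.le_max_l _ _)). specialize (HN2 n (Nat.le_max_r _ _)).
  unfold R_dist in HN1, HN2. rewrite Rminus_0_r in HN1, HN2.
  pose proof (corner_inside n) as Hn. unfold inside in Hn.
  apply (Hfail n). unfold Q. specialize (Hp n). specialize (Hq n). simpl in Hp, Hq.
  apply Hsmall; try lra.
  - pose proof (Rle_abs (wid n)). unfold wid in *. lra.
  - pose proof (Rle_abs (hgt n)). unfold hgt in *. lra.
Qed.

End RectangleBisection.

Open Scope C_scope.

(* Coquelicot views C both as a normed space over R (C_R_NormedModule: curves R -> C and
   their integrals) and over C (C_NormedModule: complex derivatives); the lemmas below
   translate the former into plain complex arithmetic. *)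
Local Notation is_derive_curve := (@is_derive R_AbsRing C_R_NormedModule).
Local Notation is_derive_C := (@is_derive C_AbsRing C_NormedModule).
Local Notation RInt_C := (@RInt C_R_CompleteNormedModule).
Local Notation is_RInt_C := (@is_RInt C_R_CompleteNormedModule).
Local Notation ex_RInt_C := (@ex_RInt C_R_CompleteNormedModule).

Lemma plus_C_R (x y : C) : @plus C_R_NormedModule x y = x + y.
Proof. now destruct x, y. Qed.

Lemma minus_C_R (x y : C) : @minus C_R_NormedModule x y = x - y.
Proof. now destruct x, y. Qed.

Lemma norm_C_R (x : C) : @norm R_AbsRing C_R_NormedModule x = Cmod x.
Proof.
  destruct x as [a b]; unfold norm; simpl; unfold prod_norm, Cmod; simpl.
  unfold norm; simpl; unfold abs; simpl.
  now rewrite !Rmult_1_r, <- !Rabs_mult, !Rabs_pos_eq by nra.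
Qed.

Lemma RInt_C_ext (g1 g2 : R -> C) (a b : R) :
  (forall t, (Rmin a b < t < Rmax a b)%R -> g1 t = g2 t) -> RInt_C g1 a b = RInt_C g2 a b.
Proof. exact (RInt_ext (V := C_R_CompleteNormedModule) g1 g2 a b). Qed.

Lemma is_RInt_C_ext (g1 g2 : R -> C) (a b : R) (I : C) :
  (forall t, (Rmin a b < t < Rmax a b)%R -> g1 t = g2 t) ->
  is_RInt_C g1 a b I -> is_RInt_C g2 a b I.
Proof. exact (is_RInt_ext (V := C_R_CompleteNormedModule) g1 g2 a b I). Qed.

Lemma Cmod_sub_ge (x y : C) : (Cmod x - Cmod y <= Cmod (x - y))%R.
Proof.
  pose proof (Cmod_triangle (x - y) y) as H. replace (x - y + y) with x in H by ring. lra.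
Qed.

Lemma Cmod_add_sub_sub_le (w x y z : C) :
  (Cmod (w + x - y - z) <= Cmod w + Cmod x + Cmod y + Cmod z)%R.
Proof.
  unfold Cminus. rewrite <- (Cmod_opp y), <- (Cmod_opp z).
  eapply Rle_trans; [apply Cmod_triangle|]. apply Rplus_le_compat_r.
  eapply Rle_trans; [apply Cmod_triangle|]. apply Rplus_le_compat_r, Cmod_triangle.
Qed.

Lemma C_eq_0_of_small (z : C) (K : R) :
  (forall eta, (0 < eta)%R -> (Cmod z <= eta * K)%R) -> z = 0.
Proof.
  intros Hsmall. apply Cmod_eq_0, Rle_antisym; [|apply Cmod_ge_0].
  apply Rnot_lt_le. intros Hz.
  set (eta := (Cmod z / (2 * (Rabs K + 1)))%R).
  pose proof (Rabs_pos K) as HK. pose proof (Rle_abs K).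
  assert (Heta : (0 < eta)%R) by (apply Rdiv_lt_0_compat; lra).
  specialize (Hsmall eta Heta).
  assert (eta * (Rabs K + 1) = Cmod z / 2)%R by (unfold eta; field; lra).
  nra.
Qed.

(* C_UniformSpace is built from product balls, while the domain of a complex derivative
   carries the Cmod balls of C_AbsRing; both give the same neighbourhoods (locally_C). *)
Lemma continuous_C_Cmod_balls (U : UniformSpace) (g : U -> C) (x : U) :
  @continuous U C_UniformSpace g x ->
  @continuous U (AbsRing_UniformSpace C_AbsRing) g x.
Proof. intros Hg P HP. apply Hg, locally_C, HP. Qed.

Lemma continuous_C_mult (U : UniformSpace) (g1 g2 : U -> C) (x : U) :
  continuous g1 x -> continuous g2 x -> continuous (fun y => g1 y * g2 y) x.
Proof.
  intros H1 H2 P HP. apply locally_C in HP.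
  exact (@continuous_mult U C_AbsRing g1 g2 x
           (continuous_C_Cmod_balls _ _ _ H1) (continuous_C_Cmod_balls _ _ _ H2) P HP).
Qed.

Lemma continuous_C_plus (g1 g2 : R -> C) (t : R) :
  continuous g1 t -> continuous g2 t -> continuous (fun s => g1 s + g2 s) t.
Proof.
  intros H1 H2. apply (continuous_ext (fun s => @plus C_R_NormedModule (g1 s) (g2 s))).
  - intros s. apply plus_C_R.
  - now apply (continuous_plus (V := C_R_NormedModule)).
Qed.

Lemma is_derive_C_local (h : C -> C) (z l : C) : is_derive_C h z l ->
  forall eta, (0 < eta)%R -> exists rho, (0 < rho)%R /\ forall w,
    (Cmod (w - z) < rho)%R -> (Cmod (h w - h z - l * (w - z)) <= eta * Cmod (w - z))%R.
Proof.
  intros [_ Hdom] eta Heta.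
  destruct (Hdom z (fun P H => H) (mkposreal eta Heta)) as [rho Hrho].
  exists rho; split; [apply cond_pos|]. intros w Hw.
  specialize (Hrho w Hw). simpl in Hrho. now rewrite (Cmult_comm l).
Qed.

Lemma is_derive_C_quadratic (h : C -> C) (z l : C) (K rho0 : R) : (0 < rho0)%R ->
  (forall w, (Cmod (w - z) < rho0)%R ->
     (Cmod (h w - h z - l * (w - z)) <= K * Cmod (w - z) ^ 2)%R) ->
  is_derive_C h z l.
Proof.
  intros Hrho0 Hrem. split; [apply is_linear_scal_l|].
  intros x Hx. apply (@is_filter_lim_locally_unique _ (AbsRing_NormedModule C_AbsRing)) in Hx. subst x.
  intros eps.
  assert (Hr : (0 < Rmin rho0 (eps / (Rabs K + 1)))%R).
  { apply Rmin_pos; [lra|]. apply Rdiv_lt_0_compat; [apply cond_pos|].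
    pose proof (Rabs_pos K); lra. }
  exists (mkposreal _ Hr). intros w Hw. simpl in Hw |- *.
  change (Cmod (h w - h z - (w - z) * l) <= eps * Cmod (w - z))%R.
  rewrite (Cmult_comm (w - z)).
  pose proof (Cmod_ge_0 (w - z)) as Hpos.
  assert (Hsmall : (Cmod (w - z) * (Rabs K + 1) <= eps)%R).
  { assert (Hw' : (Cmod (w - z) < eps / (Rabs K + 1))%R)
      by (eapply Rlt_le_trans; [exact Hw|apply Rmin_r]).
    pose proof (Rabs_pos K).
    apply (Rmult_lt_compat_r (Rabs K + 1)) in Hw'; [|lra].
    unfold Rdiv in Hw'. rewrite Rmult_assoc, Rinv_l in Hw' by lra. lra. }
  eapply Rle_trans; [apply Hrem; eapply Rlt_le_trans; [exact Hw|apply Rmin_l]|].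
  pose proof (Rle_abs K). nra.
Qed.

Lemma is_derive_C_affine (p c z : C) : is_derive_C (fun w => p + c * w) z c.
Proof.
  apply (is_derive_C_quadratic _ _ _ 0 1); [lra|]. intros w _.
  replace (p + c * w - (p + c * z) - c * (w - z)) with (RtoC 0) by ring.
  rewrite Cmod_0. nra.
Qed.

Lemma is_derive_inv_sub (a z : C) : z <> a ->
  is_derive_C (fun w => / (w - a)) z (- / (z - a) ^ 2).
Proof.
  intros Hz. set (v := z - a).
  assert (Hv : v <> 0) by (unfold v; intros E; apply Hz, Ceq_minus, E).
  assert (Hmv : (0 < Cmod v)%R) by now apply Cmod_gt_0.
  apply (is_derive_C_quadratic _ _ _ (2 / Cmod v ^ 3) (Cmod v / 2)); [lra|].
  intros w Hw. set (u := w - a).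
  assert (Hwz : w - z = u - v) by (unfold u, v; ring). rewrite Hwz in *.
  assert (Hmu : (Cmod v / 2 <= Cmod u)%R).
  { pose proof (Cmod_triangle (v - u) u) as T.
    replace (v - u + u) with v in T by ring.
    replace (v - u) with (- (u - v)) in T by ring. rewrite Cmod_opp in T. lra. }
  assert (Hu : u <> 0) by (intros E; rewrite E, Cmod_0 in Hmu; lra).
  fold v. replace (/ u - / v - - / v ^ 2 * (u - v)) with ((u - v) ^ 2 / (u * v ^ 2))
    by (field; auto).
  rewrite Cmod_div, Cmod_mult, !Cmod_pow by (apply Cmult_neq_0; [|apply Cpow_nz]; auto).
  assert (Hden : (Cmod v ^ 3 / 2 <= Cmod u * Cmod v ^ 2)%R)
    by (apply (Rmult_le_compat_r (Cmod v ^ 2)) in Hmu; [nra|nra]).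
  unfold Rdiv. rewrite (Rmult_comm (2 * _)).
  apply Rmult_le_compat_l; [apply pow2_ge_0|].
  replace (2 * / Cmod v ^ 3)%R with (/ (Cmod v ^ 3 / 2))%R by (field; lra).
  apply Rinv_le_contravar; [|exact Hden]. apply Rdiv_lt_0_compat; [apply pow_lt|]; lra.
Qed.

Lemma is_derive_C_mult (f g : C -> C) (z lf lg : C) :
  is_derive_C f z lf -> is_derive_C g z lg ->
  is_derive_C (fun w => f w * g w) z (lf * g z + f z * lg).
Proof.
  intros [_ Hf] [_ Hg].
  destruct (@is_derive_mult C_AbsRing f g z lf lg
              (conj (is_linear_scal_l _) Hf) (conj (is_linear_scal_l _) Hg) Cmult_comm)
    as [_ Hfg].
  exact (conj (is_linear_scal_l _) Hfg).
Qed.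

Lemma ex_derive_div_sub (f : C -> C) (a z : C) : entire f -> z <> a ->
  ex_derive (fun w => f w / (w - a)) z.
Proof.
  intros Hf Hz. destruct (Hf z) as [l Hl].
  change (ex_derive (fun w => f w * / (w - a)) z).
  eexists. exact (is_derive_C_mult _ _ z _ _ Hl (is_derive_inv_sub a z Hz)).
Qed.

Lemma entire_Cmod_sub_le (f : C -> C) (a : C) : entire f ->
  exists rho K, (0 < rho)%R /\ (0 <= K)%R /\
    forall w, (Cmod (w - a) < rho)%R -> (Cmod (f w - f a) <= K * Cmod (w - a))%R.
Proof.
  intros Hf. destruct (Hf a) as [l Hl].
  destruct (is_derive_C_local f a l Hl 1 Rlt_0_1) as [rho [Hrho Hloc]].
  exists rho, (Cmod l + 1)%R. split; [exact Hrho|]. split; [pose proof (Cmod_ge_0 l); lra|].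
  intros w Hw. specialize (Hloc w Hw).
  replace (f w - f a) with ((f w - f a - l * (w - a)) + l * (w - a)) by ring.
  eapply Rle_trans; [apply Cmod_triangle|]. rewrite Cmod_mult. lra.
Qed.

Lemma continuous_C_comp (U : UniformSpace) (h : C -> C) (g : U -> C) (x : U) :
  continuous g x -> ex_derive h (g x) -> continuous (fun y => h (g y)) x.
Proof.
  intros Hg Hh. apply (@continuous_comp U (AbsRing_UniformSpace C_AbsRing) C_UniformSpace).
  - now apply continuous_C_Cmod_balls.
  - exact (ex_derive_continuous h (g x) Hh).
Qed.

Definition linear_primitive (c l z0 z : C) : C := c * (z - z0) + l / 2 * (z - z0) ^ 2.

Lemma is_derive_linear_primitive (c l z0 z : C) :
  is_derive_C (linear_primitive c l z0) z (c + l * (z - z0)).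
Proof.
  apply (is_derive_C_quadratic _ _ _ (Cmod l) 1); [lra|]. intros w _.
  unfold linear_primitive.
  assert (H2 : RtoC 2 <> 0) by (intros E; injection E; lra).
  replace (c * (w - z0) + l / 2 * (w - z0) ^ 2 - (c * (z - z0) + l / 2 * (z - z0) ^ 2)
           - (c + l * (z - z0)) * (w - z)) with (l * / 2 * (w - z) ^ 2)
    by (field; exact H2).
  rewrite !Cmod_mult, Cmod_pow, (Cmod_inv _ H2), Cmod_R, Rabs_pos_eq by lra.
  pose proof (Cmod_ge_0 l). pose proof (pow2_ge_0 (Cmod (w - z))). nra.
Qed.

Lemma is_derive_curve_local (u : R -> C) (t : R) (du : C) : is_derive_curve u t du ->
  forall eta, (0 < eta)%R -> exists rho, (0 < rho)%R /\ forall s,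
    (Rabs (s - t) < rho)%R -> (Cmod (u s - u t - RtoC (s - t) * du) <= eta * Rabs (s - t))%R.
Proof.
  intros [_ Hdom] eta Heta.
  destruct (Hdom t (fun P H => H) (mkposreal eta Heta)) as [rho Hrho].
  exists rho; split; [apply cond_pos|]. intros s Hs.
  specialize (Hrho s Hs). simpl in Hrho.
  rewrite norm_C_R, minus_C_R, scal_R_Cmult in Hrho. exact Hrho.
Qed.

Lemma is_derive_curve_intro (u : R -> C) (t : R) (du : C) :
  (forall eta, (0 < eta)%R -> exists rho, (0 < rho)%R /\ forall s,
    (Rabs (s - t) < rho)%R -> (Cmod (u s - u t - RtoC (s - t) * du) <= eta * Rabs (s - t))%R) ->
  is_derive_curve u t du.
Proof.
  intros Hloc. split; [apply is_linear_scal_l|].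
  intros x Hx. apply (@is_filter_lim_locally_unique _ (AbsRing_NormedModule R_AbsRing)) in Hx.
  subst x. intros eps. destruct (Hloc eps (cond_pos eps)) as [rho [Hrho Hs]].
  exists (mkposreal rho Hrho). intros s Hst. simpl.
  rewrite norm_C_R, minus_C_R, scal_R_Cmult. exact (Hs s Hst).
Qed.

Lemma is_derive_curve_increment_le (u : R -> C) (t : R) (du : C) : is_derive_curve u t du ->
  exists rho, (0 < rho)%R /\ forall s,
    (Rabs (s - t) < rho)%R -> (Cmod (u s - u t) <= (Cmod du + 1) * Rabs (s - t))%R.
Proof.
  intros Hu. destruct (is_derive_curve_local u t du Hu 1 Rlt_0_1) as [rho [Hrho Hloc]].
  exists rho. split; [exact Hrho|]. intros s Hs. specialize (Hloc s Hs).
  replace (u s - u t) with ((u s - u t - RtoC (s - t) * du) + RtoC (s - t) * du) by ring.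
  eapply Rle_trans; [apply Cmod_triangle|]. rewrite Cmod_mult, Cmod_R. lra.
Qed.

Lemma is_derive_curve_comp (h : C -> C) (u : R -> C) (t : R) (dh du : C) :
  is_derive_C h (u t) dh -> is_derive_curve u t du ->
  is_derive_curve (fun s => h (u s)) t (dh * du).
Proof.
  intros Hh Hu. apply is_derive_curve_intro. intros eps Heps.
  set (A := (Cmod dh + 1)%R). set (B := (Cmod du + 1)%R).
  assert (HA : (0 < A)%R) by (pose proof (Cmod_ge_0 dh); unfold A; lra).
  assert (HB : (0 < B)%R) by (pose proof (Cmod_ge_0 du); unfold B; lra).
  destruct (is_derive_C_local _ _ _ Hh (eps / (2 * B))) as [rh [Hrh Hh']];
    [apply Rdiv_lt_0_compat; lra|].
  destruct (is_derive_curve_local _ _ _ Hu (eps / (2 * A))) as [ru [Hru Hu']];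
    [apply Rdiv_lt_0_compat; lra|].
  destruct (is_derive_curve_increment_le _ _ _ Hu) as [r0 [Hr0 Hlip]].
  exists (Rmin r0 (Rmin ru (rh / B))).
  split; [repeat apply Rmin_pos; try apply Rdiv_lt_0_compat; lra|].
  intros s Hs. pose proof (Rabs_pos (s - t)).
  pose proof (Rmin_l r0 (Rmin ru (rh / B))). pose proof (Rmin_r r0 (Rmin ru (rh / B))).
  pose proof (Rmin_l ru (rh / B)). pose proof (Rmin_r ru (rh / B)).
  specialize (Hlip s ltac:(lra)). specialize (Hu' s ltac:(lra)). fold B in Hlip.
  assert (Hclose : (Cmod (u s - u t) < rh)%R).
  { assert (Rabs (s - t) * B < rh)%R; [|lra].
    apply (Rmult_lt_reg_r (/ B)); [apply Rinv_0_lt_compat; lra|].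
    rewrite Rmult_assoc, Rinv_r, Rmult_1_r by lra. lra. }
  specialize (Hh' (u s) Hclose).
  replace (h (u s) - h (u t) - RtoC (s - t) * (dh * du)) with
    ((h (u s) - h (u t) - dh * (u s - u t)) + dh * (u s - u t - RtoC (s - t) * du)) by ring.
  eapply Rle_trans; [apply Cmod_triangle|]. rewrite Cmod_mult.
  replace (eps * Rabs (s - t))%R with
    (eps / (2 * B) * (B * Rabs (s - t)) + A * (eps / (2 * A) * Rabs (s - t)))%R
    by (field; lra).
  apply Rplus_le_compat.
  - eapply Rle_trans; [exact Hh'|]. apply Rmult_le_compat_l; [|exact Hlip].
    apply Rlt_le, Rdiv_lt_0_compat; lra.
  - apply Rmult_le_compat; [apply Cmod_ge_0|apply Cmod_ge_0|unfold A; lra|exact Hu'].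
Qed.

Lemma is_derive_curve_affine (p c : C) (u : R -> C) (t : R) (du : C) :
  is_derive_curve u t du -> is_derive_curve (fun s => p + c * u s) t (c * du).
Proof. exact (is_derive_curve_comp (fun w => p + c * w) u t c du (is_derive_C_affine p c (u t))). Qed.

Lemma is_derive_curve_scal (c : C) (u : R -> C) (t : R) (du : C) :
  is_derive_curve u t du -> is_derive_curve (fun s => c * u s) t (c * du).
Proof.
  intros Hu. apply (is_derive_ext (fun s => 0 + c * u s)); [intros s; apply Cplus_0_l|].
  now apply is_derive_curve_affine.
Qed.

Lemma is_derive_curve_plus (u v : R -> C) (t : R) (du dv : C) :
  is_derive_curve u t du -> is_derive_curve v t dv ->
  is_derive_curve (fun s => u s + v s) t (du + dv).
Proof.
  intros Hu Hv. pose proof (@is_derive_plus R_AbsRing C_R_NormedModule u v t du dv Hu Hv) as H.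
  rewrite plus_C_R in H. eapply is_derive_ext; [|exact H]. intros s. apply plus_C_R.
Qed.

Lemma is_derive_curve_pair (u v : R -> R) (t du dv : R) :
  is_derive u t du -> is_derive v t dv ->
  is_derive_curve (fun s => (u s, v s)) t (du, dv).
Proof.
  intros Hu Hv.
  pose proof (@is_derive_plus R_AbsRing C_R_NormedModule _ _ t _ _
     (@is_derive_scal_l R_AbsRing C_R_NormedModule u t du (1, 0)%R Hu)
     (@is_derive_scal_l R_AbsRing C_R_NormedModule v t dv (0, 1)%R Hv)) as H.
  rewrite !scal_R_Cmult, plus_C_R in H.
  replace (du, dv) with (RtoC du * (1, 0)%R + RtoC dv * (0, 1)%R)
    by (unfold RtoC, Cmult, Cplus; simpl; f_equal; ring).
  eapply is_derive_ext; [|exact H]. intros s; simpl.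
  rewrite !scal_R_Cmult, plus_C_R. unfold RtoC, Cmult, Cplus; simpl; f_equal; ring.
Qed.

Lemma is_derive_RtoC (t : R) : is_derive_curve RtoC t (RtoC 1).
Proof. apply is_derive_curve_pair; auto_derive; auto. Qed.

Definition cis (t : R) : C := (cos t, sin t).

Lemma Cmod_cis (t : R) : Cmod (cis t) = 1%R.
Proof.
  unfold Cmod, cis; simpl. rewrite !Rmult_1_r, Rplus_comm.
  pose proof (sin2_cos2 t) as E. unfold Rsqr in E. rewrite E. apply sqrt_1.
Qed.

Lemma is_derive_cis (t : R) : is_derive_curve cis t (Ci * cis t).
Proof.
  replace (Ci * cis t) with ((- sin t)%R, cos t)
    by (unfold Ci, cis, Cmult; simpl; f_equal; ring).
  apply is_derive_curve_pair; [apply is_derive_Reals, derivable_pt_lim_cos|].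
  apply is_derive_Reals, derivable_pt_lim_sin.
Qed.

Lemma continuous_of_is_derive_curve (u : R -> C) (t : R) (du : C) :
  is_derive_curve u t du -> continuous u t.
Proof. intros H. apply (@ex_derive_continuous R_AbsRing C_R_NormedModule). now exists du. Qed.

Lemma ex_RInt_contour (h : C -> C) (u du : R -> C) (a b : R) : (a <= b)%R ->
  (forall t, (a <= t <= b)%R -> is_derive_curve u t (du t)) ->
  (forall t, (a <= t <= b)%R -> continuous du t) ->
  (forall t, (a <= t <= b)%R -> ex_derive h (u t)) ->
  ex_RInt_C (fun t => h (u t) * du t) a b.
Proof.
  intros Hab Hu Hdu Hh. apply ex_RInt_continuous. intros t Ht.
  rewrite Rmin_left, Rmax_right in Ht by exact Hab.
  apply continuous_C_mult; [|now apply Hdu].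
  apply continuous_C_comp; [|now apply Hh].
  eapply continuous_of_is_derive_curve, Hu, Ht.
Qed.

Lemma is_RInt_contour_primitive (G g : C -> C) (u du : R -> C) (a b : R) : (a <= b)%R ->
  (forall t, (a <= t <= b)%R -> is_derive_curve u t (du t)) ->
  (forall t, (a <= t <= b)%R -> is_derive_C G (u t) (g (u t))) ->
  (forall t, (a <= t <= b)%R -> continuous (fun s => g (u s) * du s) t) ->
  is_RInt_C (fun t => g (u t) * du t) a b (G (u b) - G (u a)).
Proof.
  intros Hab Hu HG Hc. rewrite <- minus_C_R.
  apply (is_RInt_derive (V := C_R_CompleteNormedModule) (fun t => G (u t)));
    intros t Ht; rewrite Rmin_left, Rmax_right in Ht by exact Hab.
  - apply is_derive_curve_comp; auto.
  - auto.
Qed.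

Lemma Cmod_increment_le (u du : R -> C) (a b B : R) : (a <= b)%R ->
  (forall t, (a <= t <= b)%R -> is_derive_curve u t (du t)) ->
  (forall t, (a <= t <= b)%R -> continuous du t) ->
  (forall t, (a <= t <= b)%R -> (Cmod (du t) <= B)%R) ->
  (Cmod (u b - u a) <= (b - a) * B)%R.
Proof.
  intros Hab Hu Hc HB. rewrite <- minus_C_R, <- norm_C_R.
  apply (norm_RInt_le_const (V := C_R_CompleteNormedModule) du a b); auto.
  - intros t Ht. rewrite norm_C_R. auto.
  - apply (is_RInt_derive (V := C_R_CompleteNormedModule));
      intros t Ht; rewrite Rmin_left, Rmax_right in Ht by exact Hab; auto.
Qed.

Lemma Cmod_increment_le_abs (u du : R -> C) (a b B s t : R) :
  (a <= s <= b)%R -> (a <= t <= b)%R ->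
  (forall r, (a <= r <= b)%R -> is_derive_curve u r (du r)) ->
  (forall r, (a <= r <= b)%R -> continuous du r) ->
  (forall r, (a <= r <= b)%R -> (Cmod (du r) <= B)%R) ->
  (Cmod (u s - u t) <= B * Rabs (s - t))%R.
Proof.
  intros Hs Ht Hu Hc HB.
  destruct (Rle_dec t s) as [Hts|Hts].
  - rewrite Rabs_pos_eq, Rmult_comm by lra.
    apply (Cmod_increment_le u du); intros; try lra; [apply Hu|apply Hc|apply HB]; lra.
  - rewrite Rabs_left, Rmult_comm by lra.
    rewrite <- Cmod_opp, Copp_minus_distr. replace (- (s - t))%R with (t - s)%R by ring.
    apply (Cmod_increment_le u du); intros; try lra; [apply Hu|apply Hc|apply HB]; lra.
Qed.

Lemma contour_integral_linear_approx (h : C -> C) (u du : R -> C) (z0 l : C) (a b e B : R) :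
  (a <= b)%R ->
  (forall t, (a <= t <= b)%R -> is_derive_curve u t (du t)) ->
  (forall t, (a <= t <= b)%R -> continuous du t) ->
  (forall t, (a <= t <= b)%R -> ex_derive h (u t)) ->
  (forall t, (a <= t <= b)%R -> (Cmod (du t) <= B)%R) ->
  (forall t, (a <= t <= b)%R -> (Cmod (h (u t) - (h z0 + l * (u t - z0))) <= e)%R) ->
  (Cmod (RInt_C (fun t => h (u t) * du t)%C a b
         - (linear_primitive (h z0) l z0 (u b) - linear_primitive (h z0) l z0 (u a)))
   <= (b - a) * (e * B))%R.
Proof.
  intros Hab Hu Hdu Hh HB He.
  set (g := fun z => h z0 + l * (z - z0)).
  assert (Hg : forall z, ex_derive g z).
  { intros z. exists l. apply (is_derive_ext (fun w => (h z0 - l * z0) + l * w)).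
    - intros w. change (h z0 - l * z0 + l * w = h z0 + l * (w - z0)). ring.
    - apply is_derive_C_affine. }
  pose proof (RInt_correct _ _ _ (ex_RInt_contour h u du a b Hab Hu Hdu Hh)) as HI.
  assert (HF : is_RInt_C (fun t => g (u t) * du t) a b
                 (linear_primitive (h z0) l z0 (u b) - linear_primitive (h z0) l z0 (u a))).
  { apply is_RInt_contour_primitive; auto.
    - intros t _. apply is_derive_linear_primitive.
    - intros t Ht. apply continuous_C_mult; [|now apply Hdu].
      apply continuous_C_comp; [|apply Hg].
      eapply continuous_of_is_derive_curve, Hu, Ht. }
  pose proof (is_RInt_minus (V := C_R_CompleteNormedModule) _ _ a b _ _ HI HF) as HM.
  assert (Hbound : forall t, (a <= t <= b)%R ->
    (@norm R_AbsRing C_R_NormedModule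
       (@minus C_R_NormedModule (h (u t) * du t)%C (g (u t) * du t)%C) <= e * B)%R).
  { intros t Ht. rewrite norm_C_R, minus_C_R.
    replace (h (u t) * du t - g (u t) * du t) with ((h (u t) - g (u t)) * du t) by ring.
    rewrite Cmod_mult. apply Rmult_le_compat; auto using Cmod_ge_0. }
  pose proof (norm_RInt_le_const _ a b _ _ Hab Hbound HM) as HN.
  now rewrite norm_C_R, minus_C_R in HN.
Qed.

(** * Goursat's lemma on a parametrised rectangle *)

Section Goursat.

Variables (phi phx phy : R -> R -> C) (h : C -> C) (x0 x1 y0 y1 M : R).
Hypothesis M_pos : (0 < M)%R.
Hypothesis phi_dx : forall x y, is_derive_curve (fun s => phi s y) x (phx x y).
Hypothesis phi_dy : forall x y, is_derive_curve (fun s => phi x s) y (phy x y).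
Hypothesis phx_cont : forall x y, continuous (fun s => phx s y) x.
Hypothesis phy_cont : forall x y, continuous (fun s => phy x s) y.
Hypothesis phx_bound : forall x y, (x0 <= x <= x1)%R -> (y0 <= y <= y1)%R ->
  (Cmod (phx x y) <= M)%R.
Hypothesis phy_bound : forall x y, (x0 <= x <= x1)%R -> (y0 <= y <= y1)%R ->
  (Cmod (phy x y) <= M)%R.
Hypothesis h_derive : forall x y, (x0 <= x <= x1)%R -> (y0 <= y <= y1)%R ->
  ex_derive h (phi x y).

Definition horizontal_integral (y a b : R) : C :=
  RInt_C (fun x => h (phi x y) * phx x y) a b.

Definition vertical_integral (x c d : R) : C :=
  RInt_C (fun y => h (phi x y) * phy x y) c d.

Definition boundary_integral (a b c d : R) : C :=
  horizontal_integral c a b + vertical_integral b c d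
  - horizontal_integral d a b - vertical_integral a c d.

Lemma phi_increment_le x y x' y' :
  (x0 <= x <= x1)%R -> (y0 <= y <= y1)%R -> (x0 <= x' <= x1)%R -> (y0 <= y' <= y1)%R ->
  (Cmod (phi x' y' - phi x y) <= M * (Rabs (x' - x) + Rabs (y' - y)))%R.
Proof.
  intros Hx Hy Hx' Hy'.
  replace (phi x' y' - phi x y) with ((phi x' y' - phi x y') + (phi x y' - phi x y)) by ring.
  eapply Rle_trans; [apply Cmod_triangle|]. rewrite Rmult_plus_distr_l.
  apply Rplus_le_compat.
  - apply (Cmod_increment_le_abs (fun s => phi s y') (fun s => phx s y') x0 x1); auto.
  - apply (Cmod_increment_le_abs (fun s => phi x s) (fun s => phy x s) y0 y1); auto.
Qed.

Lemma horizontal_integral_chasles y a m b :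
  (y0 <= y <= y1)%R -> (x0 <= a)%R -> (a <= m)%R -> (m <= b)%R -> (b <= x1)%R ->
  horizontal_integral y a b = horizontal_integral y a m + horizontal_integral y m b.
Proof.
  intros Hy Ha Ham Hmb Hb. unfold horizontal_integral. rewrite <- plus_C_R.
  symmetry. apply (RInt_Chasles (V := C_R_CompleteNormedModule));
    apply ex_RInt_contour; intros; auto; apply h_derive; lra.
Qed.

Lemma vertical_integral_chasles x c m d :
  (x0 <= x <= x1)%R -> (y0 <= c)%R -> (c <= m)%R -> (m <= d)%R -> (d <= y1)%R ->
  vertical_integral x c d = vertical_integral x c m + vertical_integral x m d.
Proof.
  intros Hx Hc Hcm Hmd Hd. unfold vertical_integral. rewrite <- plus_C_R.
  symmetry. apply (RInt_Chasles (V := C_R_CompleteNormedModule));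
    apply ex_RInt_contour; intros; auto; apply h_derive; lra.
Qed.

Lemma boundary_integral_quarters a b c d :
  (x0 <= a)%R -> (a <= b)%R -> (b <= x1)%R -> (y0 <= c)%R -> (c <= d)%R -> (d <= y1)%R ->
  let m := ((a + b) / 2)%R in let m' := ((c + d) / 2)%R in
  boundary_integral a b c d =
    boundary_integral a m c m' + boundary_integral m b c m' +
    boundary_integral a m m' d + boundary_integral m b m' d.
Proof.
  intros Ha Hab Hb Hc Hcd Hd m m'. unfold boundary_integral.
  rewrite (horizontal_integral_chasles c a m b), (horizontal_integral_chasles d a m b),
    (vertical_integral_chasles a c m' d), (vertical_integral_chasles b c m' d)
    by (unfold m, m'; lra).
  ring.
Qed.

Lemma horizontal_integral_linear_approx y a b z0 l e :
  (y0 <= y <= y1)%R -> (x0 <= a)%R -> (a <= b)%R -> (b <= x1)%R ->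
  (forall x, (a <= x <= b)%R -> (Cmod (h (phi x y) - (h z0 + l * (phi x y - z0))) <= e)%R) ->
  (Cmod (horizontal_integral y a b
         - (linear_primitive (h z0) l z0 (phi b y) - linear_primitive (h z0) l z0 (phi a y)))
   <= (b - a) * (e * M))%R.
Proof.
  intros Hy Ha Hab Hb He.
  apply (contour_integral_linear_approx h (fun x => phi x y) (fun x => phx x y)); auto;
    intros x Hx; [apply h_derive|apply phx_bound]; lra.
Qed.

Lemma vertical_integral_linear_approx x c d z0 l e :
  (x0 <= x <= x1)%R -> (y0 <= c)%R -> (c <= d)%R -> (d <= y1)%R ->
  (forall y, (c <= y <= d)%R -> (Cmod (h (phi x y) - (h z0 + l * (phi x y - z0))) <= e)%R) ->
  (Cmod (vertical_integral x c d
         - (linear_primitive (h z0) l z0 (phi x d) - linear_primitive (h z0) l z0 (phi x c)))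
   <= (d - c) * (e * M))%R.
Proof.
  intros Hx Hc Hcd Hd He.
  apply (contour_integral_linear_approx h (fun y => phi x y) (fun y => phy x y)); auto;
    intros y Hy; [apply h_derive|apply phy_bound]; lra.
Qed.

Lemma boundary_integral_local eta p q : (0 < eta)%R ->
  (x0 <= p <= x1)%R -> (y0 <= q <= y1)%R ->
  exists del, (0 < del)%R /\ forall a b c d,
    (x0 <= a <= p)%R -> (p <= b <= x1)%R -> (y0 <= c <= q)%R -> (q <= d <= y1)%R ->
    (b - a < del)%R -> (d - c < del)%R ->
    (Cmod (boundary_integral a b c d) <= 2 * eta * M ^ 2 * ((b - a) + (d - c)) ^ 2)%R.
Proof.
  intros Heta Hp Hq. set (z0 := phi p q).
  destruct (h_derive p q Hp Hq) as [l Hl].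
  destruct (is_derive_C_local h z0 l Hl eta Heta) as [rho [Hrho Hlin]].
  exists (rho / (2 * M))%R. split; [apply Rdiv_lt_0_compat; lra|].
  intros a b c d Ha Hb Hc Hd Hba Hdc. set (s := ((b - a) + (d - c))%R).
  assert (Hs : (M * s < rho)%R).
  { replace rho with (M * (2 * (rho / (2 * M))))%R by (field; lra).
    apply Rmult_lt_compat_l; [lra|]. unfold s. lra. }
  assert (Happrox : forall x y, (a <= x <= b)%R -> (c <= y <= d)%R ->
     (Cmod (h (phi x y) - (h z0 + l * (phi x y - z0))) <= eta * (M * s))%R).
  { intros x y Hx Hy.
    assert (Hdist : (Cmod (phi x y - z0) <= M * s)%R).
    { eapply Rle_trans; [apply phi_increment_le; lra|].
      apply Rmult_le_compat_l; [lra|]. unfold s.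
      pose proof (Rabs_le (x - p) (b - a)). pose proof (Rabs_le (y - q) (d - c)). lra. }
    replace (h (phi x y) - (h z0 + l * (phi x y - z0)))
      with (h (phi x y) - h z0 - l * (phi x y - z0)) by ring.
    eapply Rle_trans; [apply Hlin; lra|]. apply Rmult_le_compat_l; lra. }
  pose proof (horizontal_integral_linear_approx c a b z0 l _ ltac:(lra) ltac:(lra)
    ltac:(lra) ltac:(lra) (fun x Hx => Happrox x c Hx ltac:(lra))) as Ebottom.
  pose proof (horizontal_integral_linear_approx d a b z0 l _ ltac:(lra) ltac:(lra)
    ltac:(lra) ltac:(lra) (fun x Hx => Happrox x d Hx ltac:(lra))) as Etop.
  pose proof (vertical_integral_linear_approx b c d z0 l _ ltac:(lra) ltac:(lra)
    ltac:(lra) ltac:(lra) (fun y Hy => Happrox b y ltac:(lra) Hy)) as Eright.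
  pose proof (vertical_integral_linear_approx a c d z0 l _ ltac:(lra) ltac:(lra)
    ltac:(lra) ltac:(lra) (fun y Hy => Happrox a y ltac:(lra) Hy)) as Eleft.
  set (P := linear_primitive (h z0) l z0) in *.
  unfold boundary_integral.
  replace (horizontal_integral c a b + vertical_integral b c d
           - horizontal_integral d a b - vertical_integral a c d) with
    ((horizontal_integral c a b - (P (phi b c) - P (phi a c)))
     + (vertical_integral b c d - (P (phi b d) - P (phi b c)))
     - (horizontal_integral d a b - (P (phi b d) - P (phi a d)))
     - (vertical_integral a c d - (P (phi a d) - P (phi a c)))) by ring.
  eapply Rle_trans; [apply Cmod_add_sub_sub_le|].
  replace (2 * eta * M ^ 2 * s ^ 2)%R with
    (2 * ((b - a) * (eta * (M * s) * M)) + 2 * ((d - c) * (eta * (M * s) * M)))%R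
    by (unfold s; ring).
  lra.
Qed.

Lemma goursat : (x0 <= x1)%R -> (y0 <= y1)%R -> boundary_integral x0 x1 y0 y1 = 0.
Proof.
  intros Hx Hy. apply (C_eq_0_of_small _ (2 * M ^ 2 * ((x1 - x0) + (y1 - y0)) ^ 2)).
  intros eta Heta.
  replace (eta * (2 * M ^ 2 * (x1 - x0 + (y1 - y0)) ^ 2))%R
    with (2 * eta * M ^ 2 * ((x1 - x0) + (y1 - y0)) ^ 2)%R by ring.
  (* The bound 2 eta M^2 (b - a + d - c)^2 adds up exactly over the four quarters. *)
  apply (rectangle_bisection (fun a b c d =>
    Cmod (boundary_integral a b c d) <= 2 * eta * M ^ 2 * ((b - a) + (d - c)) ^ 2)%R);
    auto.
  - intros a b c d Ha Hab Hb Hc Hcd Hd H1 H2 H3 H4.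
    rewrite (boundary_integral_quarters a b c d) by auto.
    eapply Rle_trans; [apply Cmod_triangle|].
    eapply Rle_trans; [apply Rplus_le_compat_r, Cmod_triangle|].
    eapply Rle_trans; [apply Rplus_le_compat_r, Rplus_le_compat_r, Cmod_triangle|].
    replace (2 * eta * M ^ 2 * (b - a + (d - c)) ^ 2)%R with
      (2 * eta * M ^ 2 * ((a + b) / 2 - a + ((c + d) / 2 - c)) ^ 2 +
       2 * eta * M ^ 2 * (b - (a + b) / 2 + ((c + d) / 2 - c)) ^ 2 +
       2 * eta * M ^ 2 * ((a + b) / 2 - a + (d - (c + d) / 2)) ^ 2 +
       2 * eta * M ^ 2 * (b - (a + b) / 2 + (d - (c + d) / 2)) ^ 2)%R by field.
    lra.
  - intros p q Hp Hq. apply boundary_integral_local; auto.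
Qed.

End Goursat.

Definition segment_homotopy (u v : R -> C) (l t : R) : C := u t + RtoC l * (v t - u t).

Lemma is_derive_segment_homotopy_l (u v : R -> C) (l t : R) :
  is_derive_curve (fun s => segment_homotopy u v s t) l (v t - u t).
Proof.
  pose proof (is_derive_curve_affine (u t) (v t - u t) RtoC l _ (is_derive_RtoC l)) as H.
  rewrite Cmult_1_r in H. eapply is_derive_ext; [|exact H].
  intros s. unfold segment_homotopy. f_equal. apply Cmult_comm.
Qed.

Lemma is_derive_segment_homotopy_t (u v : R -> C) (l t : R) (du dv : C) :
  is_derive_curve u t du -> is_derive_curve v t dv ->
  is_derive_curve (fun s => segment_homotopy u v l s) t (RtoC (1 - l) * du + RtoC l * dv).
Proof.
  intros Hu Hv.
  assert (E : forall s, RtoC (1 - l) * u s + RtoC l * v s = segment_homotopy u v l s)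
    by (intros s; unfold segment_homotopy; rewrite RtoC_minus; ring).
  apply (is_derive_ext _ _ _ _ E).
  apply is_derive_curve_plus; apply is_derive_curve_scal; assumption.
Qed.

Lemma Cmod_convex_le (x y : C) (l B : R) : (0 <= l <= 1)%R ->
  (Cmod x <= B)%R -> (Cmod y <= B)%R -> (Cmod (RtoC (1 - l) * x + RtoC l * y) <= B)%R.
Proof.
  intros Hl Hx Hy. eapply Rle_trans; [apply Cmod_triangle|].
  rewrite !Cmod_mult, !Cmod_R, !Rabs_pos_eq by lra. nra.
Qed.

Lemma contour_integral_segment_homotopy (h : C -> C) (u v du dv : R -> C) (T B : R) :
  (0 <= T)%R -> (0 < B)%R ->
  (forall t, is_derive_curve u t (du t)) -> (forall t, is_derive_curve v t (dv t)) ->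
  (forall t, continuous du t) -> (forall t, continuous dv t) ->
  (forall t, (0 <= t <= T)%R ->
     (Cmod (v t - u t) <= B)%R /\ (Cmod (du t) <= B)%R /\ (Cmod (dv t) <= B)%R) ->
  u 0%R = u T -> v 0%R = v T ->
  (forall l t, (0 <= l <= 1)%R -> (0 <= t <= T)%R -> ex_derive h (segment_homotopy u v l t)) ->
  RInt_C (fun t => h (u t) * du t) 0 T = RInt_C (fun t => h (v t) * dv t) 0 T.
Proof.
  intros HT HB Hu Hv Hdu Hdv Hbound Hu0 Hv0 Hh.
  set (phi := segment_homotopy u v).
  set (phx := fun (l t : R) => v t - u t).
  set (phy := fun l t => RtoC (1 - l) * du t + RtoC l * dv t).
  assert (Hcy : forall l t, continuous (fun s => phy l s) t).
  { intros l t. unfold phy.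
    apply continuous_C_plus; apply continuous_C_mult; auto using continuous_const. }
  pose proof (goursat phi phx phy h 0 1 0 T B HB
    (is_derive_segment_homotopy_l u v)
    (fun l t => is_derive_segment_homotopy_t u v l t _ _ (Hu t) (Hv t))
    (fun l t => continuous_const _ l) Hcy
    (fun l t _ Ht => proj1 (Hbound t Ht))
    (fun l t Hl Ht => Cmod_convex_le _ _ l B Hl (proj1 (proj2 (Hbound t Ht)))
                                              (proj2 (proj2 (Hbound t Ht))))
    Hh ltac:(lra) HT) as HG.
  assert (Hclosed : horizontal_integral phi phx h 0 0 1 = horizontal_integral phi phx h T 0 1).
  { apply RInt_C_ext. intros l _. unfold phi, phx, segment_homotopy. now rewrite Hu0, Hv0. }
  assert (Hu_end : RInt_C (fun t => h (u t) * du t) 0 T = vertical_integral phi phy h 0 0 T).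
  { apply RInt_C_ext. intros t _. unfold phi, phy, segment_homotopy.
    rewrite Rminus_0_r. f_equal; [f_equal|]; ring. }
  assert (Hv_end : RInt_C (fun t => h (v t) * dv t) 0 T = vertical_integral phi phy h 1 0 T).
  { apply RInt_C_ext. intros t _. unfold phi, phy, segment_homotopy.
    rewrite Rminus_eq_0. f_equal; [f_equal|]; ring. }
  unfold boundary_integral in HG. rewrite Hclosed in HG. rewrite Hu_end, Hv_end.
  apply Ceq_minus. rewrite <- (Copp_0), <- HG. ring.
Qed.

(** * Cauchy's integral formula on circles *)

Definition circle_path (c : C) (r t : R) : C := c + RtoC r * cis t.

Lemma Cmod_circle_path (c : C) (r t : R) : (0 <= r)%R -> Cmod (circle_path c r t - c) = r.
Proof.
  intros Hr. unfold circle_path. replace (c + RtoC r * cis t - c) with (RtoC r * cis t) by ring.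
  now rewrite Cmod_mult, Cmod_cis, Cmod_R, Rabs_pos_eq, Rmult_1_r.
Qed.

Lemma is_derive_circle_path (c : C) (r t : R) :
  is_derive_curve (circle_path c r) t (RtoC r * (Ci * cis t)).
Proof. apply is_derive_curve_affine, is_derive_cis. Qed.

Lemma continuous_circle_speed (r t : R) : continuous (fun s => RtoC r * (Ci * cis s)) t.
Proof.
  apply continuous_C_mult; [apply continuous_const|].
  apply continuous_C_mult; [apply continuous_const|].
  apply (continuous_of_is_derive_curve _ _ _ (is_derive_cis t)).
Qed.

Lemma circle_path_periodic (c : C) (r : R) : circle_path c r 0 = circle_path c r (2 * PI).
Proof. unfold circle_path, cis. now rewrite cos_0, sin_0, cos_2PI, sin_2PI. Qed.

Lemma circle_homotopy_avoids_center (a : C) (eps Rad l t : R) :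
  (0 < eps)%R -> (Cmod a < Rad)%R -> (0 <= l <= 1)%R ->
  circle_path a eps t + RtoC l * (circle_path 0 Rad t - circle_path a eps t) <> a.
Proof.
  intros Heps HRad Hl E. apply Ceq_minus in E.
  replace (circle_path a eps t + RtoC l * (circle_path 0 Rad t - circle_path a eps t) - a)
    with (RtoC ((1 - l) * eps + l * Rad) * cis t - RtoC l * a) in E
    by (unfold circle_path; rewrite RtoC_plus, !RtoC_mult, RtoC_minus; ring).
  pose proof (Cmod_sub_ge (RtoC ((1 - l) * eps + l * Rad) * cis t) (RtoC l * a)) as H.
  rewrite E, Cmod_0, !Cmod_mult, Cmod_cis, !Cmod_R, Rmult_1_r in H.
  pose proof (Cmod_ge_0 a).
  rewrite (Rabs_pos_eq l), Rabs_pos_eq in H by nra.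
  destruct (Rle_lt_or_eq_dec l 1) as [Hl1|Hl1]; [lra|nra|subst; lra].
Qed.

Lemma circle_integral_shrink (f : C -> C) (a : C) (eps Rad : R) :
  entire f -> (0 < eps)%R -> (Cmod a < Rad)%R ->
  RInt_C (fun t => f (circle_path 0 Rad t) / (circle_path 0 Rad t - a)
                   * (RtoC Rad * (Ci * cis t))) 0 (2 * PI)
  = RInt_C (fun t => Ci * f (circle_path a eps t)) 0 (2 * PI).
Proof.
  intros Hf Heps HRad. pose proof (Cmod_ge_0 a). pose proof PI_RGT_0.
  rewrite <- (contour_integral_segment_homotopy (fun z => f z / (z - a))
    (circle_path a eps) (circle_path 0 Rad) (fun t => RtoC eps * (Ci * cis t))
    (fun t => RtoC Rad * (Ci * cis t)) (2 * PI) (Cmod a + Rad + eps)).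
  - apply RInt_C_ext. intros t _.
    assert (Hcis : cis t <> 0) by (intros E; pose proof (Cmod_cis t); rewrite E, Cmod_0 in H1; lra).
    assert (Hcenter : circle_path a eps t - a = RtoC eps * cis t)
      by (unfold circle_path; ring).
    rewrite Hcenter. field. split; [exact Hcis|]. intros E; injection E; lra.
  - lra.
  - lra.
  - intros t. apply is_derive_circle_path.
  - intros t. apply is_derive_circle_path.
  - intros t. apply continuous_circle_speed.
  - intros t. apply continuous_circle_speed.
  - intros t _. rewrite !Cmod_mult, Cmod_Ci, Cmod_cis, !Cmod_R, !Rabs_pos_eq by lra.
    split; [|lra]. unfold circle_path.
    replace (0 + RtoC Rad * cis t - (a + RtoC eps * cis t))
      with (RtoC Rad * cis t - a - RtoC eps * cis t) by ring.
    eapply Rle_trans; [apply Cmod_triangle|]. rewrite Cmod_opp.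
    eapply Rle_trans; [apply Rplus_le_compat_r, Cmod_triangle|].
    rewrite Cmod_opp, !Cmod_mult, Cmod_cis, !Cmod_R, !Rabs_pos_eq by lra. lra.
  - apply circle_path_periodic.
  - apply circle_path_periodic.
  - intros l t Hl _. apply ex_derive_div_sub; [exact Hf|].
    now apply circle_homotopy_avoids_center.
Qed.

Lemma Cmod_circle_mean_sub_le (f : C -> C) (a : C) (eps K : R) : entire f -> (0 <= eps)%R ->
  (forall w, Cmod (w - a) = eps -> (Cmod (f w - f a) <= K)%R) ->
  (Cmod (RInt_C (fun t => Ci * f (circle_path a eps t))%C 0 (2 * PI)
         - RtoC (2 * PI) * (Ci * f a)) <= 2 * PI * K)%R.
Proof.
  intros Hf Heps HK. pose proof PI_RGT_0.
  assert (Hex : ex_RInt_C (fun t => Ci * f (circle_path a eps t)) 0 (2 * PI)).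
  { apply ex_RInt_continuous. intros t _.
    apply continuous_C_mult; [apply continuous_const|].
    apply continuous_C_comp; [|apply Hf].
    apply (continuous_of_is_derive_curve _ _ _ (is_derive_circle_path a eps t)). }
  pose proof (is_RInt_minus (V := C_R_CompleteNormedModule) _ _ 0 (2 * PI) _ _
    (RInt_correct _ _ _ Hex) (is_RInt_const (V := C_R_CompleteNormedModule) 0 (2 * PI) (Ci * f a)))
    as HM.
  assert (Hbound : forall t, (0 <= t <= 2 * PI)%R ->
    (@norm R_AbsRing C_R_NormedModule
       (@minus C_R_NormedModule (Ci * f (circle_path a eps t))%C (Ci * f a)%C) <= K)%R).
  { intros t _. rewrite norm_C_R, minus_C_R.
    replace (Ci * f (circle_path a eps t) - Ci * f a)
      with (Ci * (f (circle_path a eps t) - f a)) by ring.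
    rewrite Cmod_mult, Cmod_Ci, Rmult_1_l. apply HK, Cmod_circle_path, Heps. }
  pose proof (norm_RInt_le_const _ 0 (2 * PI) _ _ ltac:(lra) Hbound HM) as HN.
  now rewrite norm_C_R, minus_C_R, scal_R_Cmult, Rminus_0_r in HN.
Qed.

Lemma is_RInt_cauchy_circle (f : C -> C) (a : C) (Rad : R) : entire f -> (Cmod a < Rad)%R ->
  is_RInt_C (fun t => f (circle_path 0 Rad t) / (circle_path 0 Rad t - a)
                      * (RtoC Rad * (Ci * cis t))) 0 (2 * PI) (RtoC (2 * PI) * (Ci * f a)).
Proof.
  intros Hf HRad. pose proof (Cmod_ge_0 a). pose proof PI_RGT_0.
  assert (Hex : ex_RInt_C (fun t => f (circle_path 0 Rad t) / (circle_path 0 Rad t - a)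
                                    * (RtoC Rad * (Ci * cis t))) 0 (2 * PI)).
  { apply (ex_RInt_contour (fun z => f z / (z - a))); [lra| | |].
    - intros t _. apply is_derive_circle_path.
    - intros t _. apply continuous_circle_speed.
    - intros t _. apply ex_derive_div_sub; [exact Hf|]. intros E.
      pose proof (Cmod_circle_path 0 Rad t ltac:(lra)) as Hmod.
      replace (circle_path 0 Rad t - 0) with (circle_path 0 Rad t) in Hmod by ring.
      rewrite E in Hmod. lra. }
  replace (RtoC (2 * PI) * (Ci * f a)) with (RInt_C (fun t =>
    f (circle_path 0 Rad t) / (circle_path 0 Rad t - a) * (RtoC Rad * (Ci * cis t))) 0 (2 * PI));
    [now apply RInt_correct|].
  apply Ceq_minus.
  destruct (entire_Cmod_sub_le f a Hf) as [rho [K [Hrho [HK Hlip]]]].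
  apply (C_eq_0_of_small _ (2 * PI * K)). intros eta Heta.
  set (eps := Rmin (rho / 2) eta).
  assert (Heps : (0 < eps)%R) by (apply Rmin_pos; lra).
  assert (Heps_le : (eps <= eta)%R) by apply Rmin_r.
  rewrite (circle_integral_shrink f a eps Rad Hf Heps HRad).
  eapply Rle_trans; [apply (Cmod_circle_mean_sub_le f a eps (K * eps)); [exact Hf|lra|]|].
  - intros w Hw. rewrite <- Hw. apply Hlip. rewrite Hw.
    pose proof (Rmin_l (rho / 2) eta). fold eps in H1. lra.
  - apply Rle_trans with (2 * PI * (K * eta))%R; [|right; ring].
    apply Rmult_le_compat_l; [lra|]. now apply Rmult_le_compat_l.
Qed.

Lemma circle_integral_circle_path (Rad : R) (g : C -> C) :
  circle_integral Rad g = / (RtoC (2 * PI) * Ci) *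
    RInt_C (fun t => g (circle_path 0 Rad t) * (RtoC Rad * (Ci * cis t))) 0 (2 * PI).
Proof.
  unfold circle_integral. f_equal.
  - f_equal. unfold RtoC, Ci, Cmult; simpl. f_equal; ring.
  - apply RInt_C_ext. intros t _. f_equal; [f_equal|];
      unfold circle_path, cis, RtoC, Ci, Cmult, Cplus; simpl; f_equal; ring.
Qed.

Lemma circle_integral_ext (Rad : R) (g1 g2 : C -> C) : (0 <= Rad)%R ->
  (forall z, Cmod z = Rad -> g1 z = g2 z) -> circle_integral Rad g1 = circle_integral Rad g2.
Proof.
  intros HRad Hg. rewrite !circle_integral_circle_path. f_equal.
  apply RInt_C_ext. intros t _. f_equal. apply Hg.
  rewrite <- (Cmod_circle_path 0 Rad t HRad) at 2.
  now replace (circle_path 0 Rad t - 0) with (circle_path 0 Rad t) by ring.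
Qed.

Lemma circle_integral_cauchy_sum (f : C -> C) (r : R) (a b : C) (Rad : R) :
  entire f -> (Cmod a < Rad)%R -> (Cmod b < Rad)%R ->
  circle_integral Rad (fun z => RtoC r * (f z / (z - a)) + f z / (z - b)) = RtoC r * f a + f b.
Proof.
  intros Hf Ha Hb. rewrite circle_integral_circle_path.
  pose proof (is_RInt_plus (V := C_R_CompleteNormedModule) _ _ 0 (2 * PI) _ _
    (is_RInt_scal (V := C_R_CompleteNormedModule) _ _ _ r _ (is_RInt_cauchy_circle f a Rad Hf Ha))
    (is_RInt_cauchy_circle f b Rad Hf Hb)) as HI.
  rewrite plus_C_R, scal_R_Cmult in HI.
  apply (is_RInt_C_ext _ (fun t => (RtoC r * (f (circle_path 0 Rad t) / (circle_path 0 Rad t - a))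
     + f (circle_path 0 Rad t) / (circle_path 0 Rad t - b)) * (RtoC Rad * (Ci * cis t)))) in HI;
    [|intros t _; rewrite plus_C_R, scal_R_Cmult; ring].
  rewrite (is_RInt_unique _ _ _ _ HI).
  field. split; [apply Ci_nz|]. intros E; injection E. pose proof PI_RGT_0. lra.
Qed.

Lemma circle_integral_cauchy (f : C -> C) (a : C) (Rad : R) :
  entire f -> (Cmod a < Rad)%R -> circle_integral Rad (fun z => f z / (z - a)) = f a.
Proof.
  intros Hf Ha. pose proof (Cmod_ge_0 a).
  rewrite (circle_integral_ext Rad _ (fun z => RtoC 0 * (f z / (z - a)) + f z / (z - a)))
    by (lra || (intros; ring)).
  rewrite circle_integral_cauchy_sum by assumption. ring.
Qed.

Definition single_coord (a : C) (h : nat) : C := match h with 1%nat => a | _ => 0 end.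

Lemma Csum_first_two (n : nat) (g : nat -> C) : (2 <= n)%nat ->
  (forall h, (2 <= h)%nat -> g h = 0) -> Csum n g = g 0%nat + g 1%nat.
Proof.
  intros Hn Hg. induction n as [|n IH]; [lia|].
  destruct (Nat.eq_dec n 1) as [->|Hn1]; simpl.
  - ring.
  - rewrite IH, (Hg n) by lia. ring.
Qed.

Lemma Ps_single_coord (m : nat) (a z : C) :
  Ps (S (S m)) (single_coord a) z = z ^ S m * (z - a).
Proof.
  unfold Ps. rewrite Csum_first_two by (lia || (intros [|[|h]] Hh; [lia|lia|simpl; ring])).
  replace (S (S m) - 0)%nat with (S (S m)) by lia.
  replace (S (S m) - 1)%nat with (S m) by lia.
  simpl. ring.
Qed.

Lemma dPs_single_coord (m : nat) (a z : C) : dPs (S (S m)) (single_coord a) z =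
  RtoC (INR (S (S m))) * z ^ S m - RtoC (INR (S m)) * a * z ^ m.
Proof.
  unfold dPs. rewrite Csum_first_two by (lia || (intros [|[|h]] Hh; [lia|lia|simpl; ring])).
  replace (S (S m) - 0 - 1)%nat with (S m) by lia.
  replace (S (S m) - 1 - 1)%nat with m by lia.
  replace (S (S m) - 0)%nat with (S (S m)) by lia.
  replace (S (S m) - 1)%nat with (S m) by lia.
  simpl. ring.
Qed.

Lemma admissible_single_coord (m : nat) (a : C) (Rad : R) :
  admissible (S (S m)) (single_coord a) Rad -> (Cmod a < Rad)%R.
Proof. intros [_ Hroots]. apply Hroots. rewrite Ps_single_coord. ring. Qed.

Lemma Phi_single_coord (f : C -> C) (m : nat) (a : C) (Rad : R) :
  entire f -> admissible (S (S m)) (single_coord a) Rad ->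
  Phi f (S (S m)) (single_coord a) Rad (S m) = f a.
Proof.
  intros Hf Hadm. pose proof (admissible_single_coord m a Rad Hadm) as Ha.
  pose proof (Cmod_ge_0 a). unfold Phi.
  rewrite (circle_integral_ext Rad _ (fun z => f z / (z - a))); [|lra|].
  - now apply circle_integral_cauchy.
  - intros z Hz. rewrite Ps_single_coord.
    assert (z <> 0) by (intros E; rewrite E, Cmod_0 in Hz; lra).
    assert (z - a <> 0) by (intros E; apply Ceq_minus in E; subst; lra).
    field. split; [|apply Cpow_nz]; assumption.
Qed.

Lemma Psi_single_coord (f : C -> C) (m : nat) (a : C) (Rad : R) :
  entire f -> admissible (S (S m)) (single_coord a) Rad ->
  Psi f (S (S m)) (single_coord a) Rad 0 = RtoC (INR (S m)) * f 0 + f a.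
Proof.
  intros Hf Hadm. pose proof (admissible_single_coord m a Rad Hadm) as Ha.
  pose proof (Cmod_ge_0 a). unfold Psi.
  rewrite (circle_integral_ext Rad _
    (fun z => RtoC (INR (S m)) * (f z / (z - 0)) + f z / (z - a))); [|lra|].
  - apply circle_integral_cauchy_sum; [exact Hf| |exact Ha]. rewrite Cmod_0. lra.
  - intros z Hz. rewrite Ps_single_coord, dPs_single_coord, S_INR with (n := S m), RtoC_plus.
    assert (z <> 0) by (intros E; rewrite E, Cmod_0 in Hz; lra).
    assert (z - a <> 0) by (intros E; apply Ceq_minus in E; subst; lra).
    simpl Cpow. field. repeat split; try apply Cpow_nz; assumption.
Qed.

Theorem mainTheorem2 (k : nat) (hk : (2 <= k)%nat) (f : C -> C)
  (hf : entire f) (hnz : exists z : C, f z <> 0) :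
  (exists s : nat -> C, forall Rad : R, admissible k s Rad ->
      exists j : nat, (j < k)%nat /\ Phi f k s Rad j <> 0) /\
  (exists s : nat -> C, forall Rad : R, admissible k s Rad ->
      exists j : nat, (j < k)%nat /\ Psi f k s Rad j <> 0).
Proof.
  destruct k as [|[|m]]; [lia|lia|].
  assert (Ha : exists a, f a <> 0 /\ (a = 0 \/ f 0 = 0)).
  { destruct (Ceq_dec (f 0) 0) as [H0|H0]; [destruct hnz as [z Hz]; exists z|exists 0]; auto. }
  destruct Ha as [a [Hfa Ha0]].
  split; exists (single_coord a); intros Rad Hadm.
  - exists (S m). split; [lia|]. now rewrite Phi_single_coord.
  - exists 0%nat. split; [lia|]. rewrite Psi_single_coord by assumption.
    destruct Ha0 as [-> | ->].
    + replace (RtoC (INR (S m)) * f 0 + f 0) with (RtoC (INR (S (S m))) * f 0)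
        by (rewrite S_INR with (n := S m), RtoC_plus; ring).
      apply Cmult_neq_0; [|exact Hfa]. intros E.
      apply (f_equal Re) in E. rewrite re_RtoC in E. now apply (not_0_INR (S (S m))).
    + now rewrite Cmult_0_r, Cplus_0_l.
Qed.
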